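(* Let $\mathbf{F}=(f_{ij})$ be an $n\times n$ nonnegative matrix, $\vec z=(z_1,\dots,z_n)^{\mathrm T}$ a nonnegative column vector and $\vec y=(y_1,\dots,y_n)$ a nonnegative row vector. Define $T^{\mathrm{in}}_i=\sum_{j} f_{ij}+z_i$ and $T^{\mathrm{out}}_j=\sum_{i} f_{ij}+y_j$, assume all are positive, and assume steady state: $T^{\mathrm{in}}_\ell=T^{\mathrm{out}}_\ell$ for all $\ell$. Let $\mathbf G=(g_{ij})$ with $g_{ij}=f_{ij}/T^{\mathrm{out}}_j$ and $\mathbf G'=(g'_{ij})$ with $g'_{ij}=f_{ij}/T^{\mathrm{in}}_i$. Then $\sum_{i=1}^n(\mathbf G\vec z)_i=\sum_{i=1}^n(\vec y\mathbf G')_i$.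
   Context: $f_{ij}$ is the flow from node $j$ to node $i$, $z_i$ the boundary input to node $i$, $y_j$ the boundary output from node $j$. *)

From mathcomp Require Import all_boot all_order all_algebra.
Set Implicit Arguments. Unset Strict Implicit. Unset Printing Implicit Defensive.
Import Order.TTheory GRing.Theory Num.Theory.
Local Open Scope ring_scope.

(* f_{ij} = F i j is the flow from node j to node i. *)
Definition Tin (R : ringType) (n : nat) (F : 'M[R]_n) (z : 'cV[R]_n) (i : 'I_n) : R :=
  \sum_(j < n) F i j + z i 0.
Definition Tout (R : ringType) (n : nat) (F : 'M[R]_n) (y : 'rV[R]_n) (j : 'I_n) : R :=
  \sum_(i < n) F i j + y 0 j.
Definition Gout (R : fieldType) (n : nat) (F : 'M[R]_n) (y : 'rV[R]_n) : 'M[R]_n :=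
  \matrix_(i, j) (F i j / Tout F y j).
Definition Gin (R : fieldType) (n : nat) (F : 'M[R]_n) (z : 'cV[R]_n) : 'M[R]_n :=
  \matrix_(i, j) (F i j / Tin F z i).

From mathcomp Require Import all_boot all_order all_algebra.
Set Implicit Arguments. Unset Strict Implicit. Unset Printing Implicit Defensive.
Import Order.TTheory GRing.Theory Num.Theory.
Local Open Scope ring_scope.

(* Both sides equal the total boundary flow minus [\sum_j y_j z_j / T_j]: the
   column sums of [G] are [1 - y_j / T_j] and the row sums of [G'] are
   [1 - z_i / T_i], while summing the steady-state balance over all nodes
   shows that total input equals total output. *)

Lemma sum_mulmx_col (R : pzRingType) (m n : nat) (A : 'M[R]_(m, n))
    (v : 'cV[R]_n) :
  \sum_(i < m) (A *m v) i 0 = \sum_(j < n) (\sum_(i < m) A i j) * v j 0.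
Proof.
under eq_bigr do rewrite mxE.
by rewrite exchange_big /=; apply: eq_bigr => j _; rewrite mulr_suml.
Qed.

Lemma sum_mulmx_row (R : pzRingType) (m n : nat) (u : 'rV[R]_m)
    (A : 'M[R]_(m, n)) :
  \sum_(j < n) (u *m A) 0 j = \sum_(i < m) u 0 i * (\sum_(j < n) A i j).
Proof.
under eq_bigr do rewrite mxE.
by rewrite exchange_big /=; apply: eq_bigr => i _; rewrite mulr_sumr.
Qed.

Lemma sum_Tin (R : nzRingType) (n : nat) (F : 'M[R]_n) (z : 'cV[R]_n) :
  \sum_(i < n) Tin F z i = \sum_(i < n) \sum_(j < n) F i j + \sum_(i < n) z i 0.
Proof. exact: big_split. Qed.

Lemma sum_Tout (R : nzRingType) (n : nat) (F : 'M[R]_n) (y : 'rV[R]_n) :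
  \sum_(j < n) Tout F y j = \sum_(i < n) \sum_(j < n) F i j + \sum_(j < n) y 0 j.
Proof. by rewrite big_split /= exchange_big. Qed.

Lemma steady_boundary_balance (R : nzRingType) (n : nat) (F : 'M[R]_n)
    (z : 'cV[R]_n) (y : 'rV[R]_n) :
  (forall l, Tin F z l = Tout F y l) ->
  \sum_(i < n) z i 0 = \sum_(j < n) y 0 j.
Proof.
move=> steady; apply: (@addrI _ (\sum_(i < n) \sum_(j < n) F i j)).
by rewrite -sum_Tin -sum_Tout; apply: eq_bigr => l _.
Qed.

Lemma colsum_Gout (R : fieldType) (n : nat) (F : 'M[R]_n) (y : 'rV[R]_n)
    (j : 'I_n) :
  Tout F y j != 0 -> \sum_(i < n) Gout F y i j = 1 - y 0 j / Tout F y j.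
Proof.
move=> nzT; under eq_bigr do rewrite mxE.
have -> : \sum_(i < n) F i j / Tout F y j = (Tout F y j - y 0 j) / Tout F y j.
  by rewrite -mulr_suml /Tout addrK.
by rewrite mulrBl divff.
Qed.

Lemma rowsum_Gin (R : fieldType) (n : nat) (F : 'M[R]_n) (z : 'cV[R]_n)
    (i : 'I_n) :
  Tin F z i != 0 -> \sum_(j < n) Gin F z i j = 1 - z i 0 / Tin F z i.
Proof.
move=> nzT; under eq_bigr do rewrite mxE.
have -> : \sum_(j < n) F i j / Tin F z i = (Tin F z i - z i 0) / Tin F z i.
  by rewrite -mulr_suml /Tin addrK.
by rewrite mulrBl divff.
Qed.

Theorem proposition1 (R : realFieldType) (n : nat)
  (F : 'M[R]_n) (z : 'cV[R]_n) (y : 'rV[R]_n)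
  (hF : forall i j, 0 <= F i j)
  (hz : forall i, 0 <= z i 0)
  (hy : forall j, 0 <= y 0 j)
  (hTin : forall i, 0 < Tin F z i)
  (hTout : forall j, 0 < Tout F y j)
  (hsteady : forall l, Tin F z l = Tout F y l) :
  \sum_(i < n) (Gout F y *m z) i 0 = \sum_(i < n) (y *m Gin F z) 0 i.
Proof.
rewrite sum_mulmx_col sum_mulmx_row.
under eq_bigr do rewrite colsum_Gout ?gt_eqF // mulrBl mul1r.
under [RHS]eq_bigr do rewrite rowsum_Gin ?gt_eqF // mulrBr mulr1 hsteady.
rewrite !sumrB (steady_boundary_balance hsteady); congr (_ - _).
by apply: eq_bigr => i _; rewrite mulrAC mulrA.
Qed.
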